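(* Let $M, K, P, N$ be positive integers with $M \le K \le P$ and such that $P$ divides $N$. Let $\mathbf{A} = [\mathbf{a}_1, \ldots, \mathbf{a}_M]^T \in \mathbb{R}^{M \times N}$ be any matrix, and let $\mathbf{B} \in \mathbb{R}^{P \times K}$ be a matrix such that every square sub-matrix of $\mathbf{B}$ is invertible. For vectors $\mathbf{z}_1, \ldots, \mathbf{z}_{K-M} \in \mathbb{R}^N$, let $\tilde{\mathbf{A}} = [\mathbf{a}_1, \ldots, \mathbf{a}_M, \mathbf{z}_1, \ldots, \mathbf{z}_{K-M}]^T \in \mathbb{R}^{K \times N}$ be the matrix obtained by appending the rows $\mathbf{z}_1^T, \ldots, \mathbf{z}_{K-M}^T$ to $\mathbf{A}$. Then there exists a choice of $\mathbf{z}_1, \ldots, \mathbf{z}_{K-M}$ such that every row of $\mathbf{F} = \mathbf{B}\tilde{\mathbf{A}}$ has sparsity at most $s = \frac{N}{P}(P-K+M)$.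
   Context: The sparsity of a vector is its number of nonzero entries. A square sub-matrix of $\mathbf{B}$ is a matrix obtained by selecting some set of $r$ rows and some set of $r$ columns of $\mathbf{B}$ (for any $r \ge 1$). *)

From HB Require Import structures.
From mathcomp Require Import all_boot all_order all_algebra.
From mathcomp Require Import reals.
Set Implicit Arguments. Unset Strict Implicit. Unset Printing Implicit Defensive.
Import Order.TTheory GRing.Theory Num.Theory.
Local Open Scope ring_scope.

Definition sparsity (R : ringType) (n : nat) (v : 'rV[R]_n) : nat :=
  #|[set j : 'I_n | v 0 j != 0]|.

Definition all_square_submx_invertible (R : fieldType) (p k : nat)
    (B : 'M[R]_(p, k)) : Prop :=
  forall (r : nat) (f : 'I_r -> 'I_p) (g : 'I_r -> 'I_k),
    (0 < r)%N -> injective f -> injective g ->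
    mxsub f g B \in unitmx.

Definition append_rows (R : Type) (M K N : nat) (hMK : (M <= K)%N)
    (A : 'M[R]_(M, N)) (Z : 'M[R]_(K - M, N)) : 'M[R]_(K, N) :=
  castmx (subnKC hMK, erefl N) (col_mx A Z).

(* Write B = [B1 | B2] with B1 the first M columns, so that F = B1 A + B2 Z.
   To column j attach the cyclic window of rows {i : (i + j) mod P < K - M};
   those K - M rows of B2 form an invertible square submatrix, so column j of Z
   can be chosen to make column j of F vanish on the window.  A fixed row i is
   outside the window of column j for exactly P - (K - M) residues of j modulo P,
   hence for N/P (P - K + M) columns j. *)

From HB Require Import structures.
From mathcomp Require Import all_boot all_order all_algebra.
From mathcomp Require Import reals.
From mathcomp Require Import zify.

Set Implicit Arguments.
Unset Strict Implicit.
Unset Printing Implicit Defensive.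
Import Order.TTheory GRing.Theory Num.Theory.

Lemma card_ord_count (n : nat) (q : pred nat) :
  #|[set j : 'I_n | q j]| = count q (iota 0 n).
Proof.
rewrite -sum1_count -sum1_card.
have -> : iota 0 n = index_iota 0 n by rewrite /index_iota subn0.
by rewrite big_mkord; apply: eq_bigl => j; rewrite inE.
Qed.

Lemma count_iota_mod (p L : nat) (a : pred nat) :
  count (fun j => a (j %% p)) (iota 0 (L * p)) = L * count a (iota 0 p).
Proof.
elim: L => [//|L IH]; rewrite mulSnr iotaD count_cat IH mulSnr; congr (_ + _).
rewrite add0n -[L * p]addn0 iotaDl count_map.
by apply: eq_in_count => j; rewrite mem_iota => ltjp; rewrite /= modnMDl modn_small.
Qed.

Lemma card_ord_mod (p N : nat) (a : pred nat) : p %| N ->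
  #|[set j : 'I_N | a (j %% p)]| = N %/ p * #|[set b : 'I_p | a b]|.
Proof.
move=> dvd_pN; rewrite (card_ord_count _ (fun j => a (j %% p))) card_ord_count.
by rewrite -{1}(divnK dvd_pN) count_iota_mod.
Qed.

Lemma card_ord_geq (n k : nat) : #|[set b : 'I_n | k <= b]| = n - k.
Proof.
rewrite card_ord_count; elim: n => [//|n IH].
by rewrite -addn1 iotaD count_cat IH /=; case: leqP; lia.
Qed.

Local Open Scope ring_scope.

Lemma mulmx_castmx_col_mx (R : pzRingType) (p m1 m2 m n : nat)
    (e : (m1 + m2)%N = m) (B : 'M[R]_(p, m)) (A : 'M_(m1, n)) (Z : 'M_(m2, n)) :
  B *m castmx (e, erefl n) (col_mx A Z) =
  colsub (cast_ord e \o lshift m2) B *m A + colsub (cast_ord e \o @rshift m1 m2) B *m Z.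
Proof.
case: m / e B => B; rewrite castmx_id -{1}[B]hsubmxK mul_row_col.
rewrite lsubmxEsub rsubmxEsub; congr (_ + _); congr (_ *m _).
all: by apply/matrixP => i j; rewrite !mxE; congr (B _ _); apply: val_inj.
Qed.

Lemma rows_cancelable_columnwise (R : comUnitRingType) (p k n : nat)
    (B : 'M[R]_(p, k)) (Y : 'M[R]_(p, n)) (f : 'I_n -> 'I_k -> 'I_p) :
    (forall j, rowsub (f j) B \in unitmx) ->
  exists Z : 'M_(k, n), forall j t, (Y + B *m Z) (f j t) j = 0.
Proof.
move=> unitB; pose W j := - (invmx (rowsub (f j) B) *m rowsub (f j) Y).
exists (\matrix_(t, j) W j t j) => j t; rewrite [LHS]mxE.
have -> : (B *m \matrix_(t, j) W j t j) (f j t) j = (rowsub (f j) B *m W j) t j.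
  by rewrite !mxE; apply: eq_bigr => l _; rewrite !mxE.
by rewrite /W mulmxN mulKVmx // !mxE subrr.
Qed.

Lemma all_square_submx_unitmx (R : fieldType) (p q r : nat) (B : 'M[R]_(p, q))
    (f : 'I_r -> 'I_p) (g : 'I_r -> 'I_q) :
  all_square_submx_invertible B -> injective f -> injective g ->
  mxsub f g B \in unitmx.
Proof.
case: r f g => [|r] f g hB injf injg; last exact: hB.
by rewrite unitmxE det_mx00 unitr1.
Qed.

Section CyclicWindow.

Variables (p k : nat).
Hypothesis (k_le_p : (k <= p.+1)%N).

Definition cyclic_window (c : 'I_p.+1) (t : 'I_k) : 'I_p.+1 := inord t - c.

Lemma cyclic_window_inj (c : 'I_p.+1) : injective (cyclic_window c).
Proof.
have ltSp (t : 'I_k) : (t < p.+1)%N by apply: leq_trans (ltn_ord t) k_le_p.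
move=> t t' /addIr /(congr1 (@nat_of_ord _)); rewrite !inordK ?ltSp //.
exact: val_inj.
Qed.

Lemma cyclic_windowK (c i : 'I_p.+1) (lt_ic_k : ((i + c)%R < k)%N) :
  cyclic_window c (Ordinal lt_ic_k) = i.
Proof. by rewrite /cyclic_window (inord_val (i + c)) addrK. Qed.

Lemma card_outside_cyclic_windows (N : nat) (i : 'I_p.+1) : (p.+1 %| N)%N ->
  #|[set j : 'I_N | (k <= (i + inZp j)%R)%N]| = (N %/ p.+1 * (p.+1 - k))%N.
Proof.
move=> dvd_pN; rewrite (card_ord_mod (fun b => k <= (i + b) %% p.+1)%N) //.
rewrite -(card_ord_geq _ k) -[in RHS](card_preimset _ (addrI i)).
by congr (_ * _)%N; apply: eq_card => b; rewrite !inE.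
Qed.

End CyclicWindow.

Theorem lemma2 (R : realType) (M K P N : nat)
  (hM : (0 < M)%N) (hK : (0 < K)%N) (hP : (0 < P)%N) (hN : (0 < N)%N)
  (hMK : (M <= K)%N) (hKP : (K <= P)%N) (hPN : (P %| N)%N)
  (A : 'M[R]_(M, N)) (B : 'M[R]_(P, K))
  (hB : all_square_submx_invertible B) :
  exists Z : 'M[R]_(K - M, N),
    forall i : 'I_P,
      (sparsity (row i (B *m append_rows hMK A Z)) <= N %/ P * (P - K + M))%N.
Proof.
case: P hP hKP hPN B hB => [//|p] _ hKP hPN B hB.
set k := (K - M)%N; have k_le_p : (k <= p.+1)%N by rewrite /k; lia.
pose window (j : 'I_N) : 'I_k -> 'I_p.+1 := cyclic_window (inZp j).
pose B1 := colsub (cast_ord (subnKC hMK) \o lshift k) B.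
pose B2 := colsub (cast_ord (subnKC hMK) \o @rshift M k) B.
have B2_unit j : rowsub (window j) B2 \in unitmx.
  rewrite -mxsubrc; apply: all_square_submx_unitmx hB (@cyclic_window_inj _ _ k_le_p _) _.
  exact: inj_comp (@cast_ord_inj _ _ _) (@rshift_inj M k).
have [Z zero_on_windows] := rows_cancelable_columnwise (B1 *m A) B2_unit.
exists Z => i; rewrite /append_rows mulmx_castmx_col_mx.
apply: (@leq_trans #|[set j : 'I_N | (k <= (i + inZp j)%R)%N]|).
  apply/subset_leq_card/subsetP => j; rewrite !inE mxE; apply: contraR.
  by rewrite -ltnNge => in_window; rewrite -(cyclic_windowK in_window) zero_on_windows.
by rewrite card_outside_cyclic_windows // leq_mul //; lia.
Qed.
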